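(* Let $\mathcal{H}$ be a complex Hilbert space and $B,C\in\mathcal{B}(\mathcal{H})$. Then $$w\left(\begin{bmatrix}0 & B\\ C & 0\end{bmatrix}\right)\le \frac12\max\{\|B\|,\|C\|\}+\frac12\max\left\{r^{1/2}(|B||C^*|),\,r^{1/2}(|B^*||C|)\right\}.$$
   Context: $\mathcal{B}(\mathcal{H})$ is the algebra of bounded linear operators on $\mathcal{H}$ with operator norm $\|\cdot\|$. For $A\in\mathcal{B}(\mathcal{H})$, $A^*$ is the adjoint, $|A|=(A^*A)^{1/2}$, $|A^*|=(AA^* )^{1/2}$, $w(A)=\sup_{\|x\|=1}|\langle Ax,x\rangle|$ is the numerical radius, and $r(A)$ is the spectral radius. For $A,B,C,D\in\mathcal{B}(\mathcal{H})$, the operator matrix $\begin{bmatrix}A&B\\C&D\end{bmatrix}$ is the operator on $\mathcal{H}\oplus\mathcal{H}$ given by $(x_1,x_2)\mapsto(Ax_1+Bx_2,\,Cx_1+Dx_2)$; $0$ denotes the zero operator. *)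

From HB Require Import structures.
From mathcomp Require Import all_boot all_order all_algebra.
From mathcomp Require Import classical_sets boolp reals.
From mathcomp Require Import complex.
Set Implicit Arguments. Unset Strict Implicit. Unset Printing Implicit Defensive.
Import Order.TTheory GRing.Theory Num.Theory.
Local Open Scope ring_scope.
Local Open Scope classical_set_scope.
Local Open Scope complex_scope.

Section Hilbert.
Variable R : realType.
Variable V : lmodType R[i].

Definition hnorm (ip : V -> V -> R[i]) (x : V) : R :=
  Num.sqrt (complex.Re (ip x x)).

Definition is_hilbert (ip : V -> V -> R[i]) : Prop :=
  [/\ (forall (a : R[i]) (x y z : V), ip (a *: x + y) z = a * ip x z + ip y z),
      (forall x y : V, ip y x = (ip x y)^*),
      (forall x : V, 0 <= ip x x),
      (forall x : V, ip x x = 0 -> x = 0) &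
      (forall u : nat -> V,
         (forall e : R, 0 < e -> exists N : nat, forall m n : nat,
            (N <= m)%N -> (N <= n)%N -> hnorm ip (u m - u n) < e) ->
         exists l : V, forall e : R, 0 < e -> exists N : nat, forall n : nat,
            (N <= n)%N -> hnorm ip (u n - l) < e)].

Definition bounded_op (ip : V -> V -> R[i]) (A : V -> V) : Prop :=
  (forall (a : R[i]) (x y : V), A (a *: x + y) = a *: A x + A y) /\
  exists M : R, forall x : V, hnorm ip (A x) <= M * hnorm ip x.

Definition opnorm (ip : V -> V -> R[i]) (A : V -> V) : R :=
  sup [set hnorm ip (A x) | x in [set x : V | hnorm ip x = 1]].

Definition is_adjoint (ip : V -> V -> R[i]) (A As : V -> V) : Prop :=
  forall x y : V, ip (A x) y = ip x (As y).

Definition positive_op (ip : V -> V -> R[i]) (P : V -> V) : Prop :=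
  bounded_op ip P /\ forall x : V, 0 <= ip (P x) x.

Definition is_sqrt_op (ip : V -> V -> R[i]) (T P : V -> V) : Prop :=
  positive_op ip P /\ forall x : V, P (P x) = T x.

Definition invertible_op (ip : V -> V -> R[i]) (A : V -> V) : Prop :=
  exists S : V -> V, bounded_op ip S /\
    (forall x, A (S x) = x) /\ (forall x, S (A x) = x).

Definition specrad (ip : V -> V -> R[i]) (A : V -> V) : R :=
  sup [set Normc.normc lam | lam in
        [set lam : R[i] | ~ invertible_op ip (fun x => lam *: x - A x)]].

Definition ip2 (ip : V -> V -> R[i]) (x y : V * V) : R[i] :=
  ip x.1 y.1 + ip x.2 y.2.

Definition opmx (A B C D : V -> V) (x : V * V) : V * V :=
  (A x.1 + B x.2, C x.1 + D x.2).

Definition numrad2 (ip : V -> V -> R[i]) (T : V * V -> V * V) : R :=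
  sup [set Normc.normc (ip2 ip (T z) z) |
        z in [set z : V * V | complex.Re (ip2 ip z z) = 1]].

End Hilbert.

From HB Require Import structures.
From mathcomp Require Import all_boot all_order all_algebra.
From mathcomp Require Import classical_sets boolp reals.
From mathcomp Require Import complex.
From mathcomp Require Import lra ring.
Set Implicit Arguments. Unset Strict Implicit. Unset Printing Implicit Defensive.
Import Order.TTheory GRing.Theory Num.Theory.
Local Open Scope ring_scope.
Local Open Scope complex_scope.
Local Notation Re := complex.Re.
Local Notation Im := complex.Im.

(* Write z = (x, y) with |x|^2 + |y|^2 = 1 and rotate <T z, z> = <B y, x> + <C x, y> onto
   the nonnegative reals.  The mixed Schwarz inequality |<B y, x>|^2 <= <|B| y, y> <|B^*| x, x>
   (and its analogue for C) and Cauchy-Schwarz in R^2 bound |<T z, z>|^2 by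
   (<|B| y, y> + <|C^*| y, y>) (<|B^*| x, x> + <|C| x, x>).  For positive P, Q of norm at most
   m, <P y, y> + <Q y, y> <= (m + r(P Q)^(1/2)) |y|^2, because the cross term of |(P + Q) y|^2
   is controlled by <Q P y, P y> <= r(P Q) <P y, y>: the supremum of this Rayleigh-type
   quotient is an approximate eigenvalue of P Q.  Finally |x|^2 |y|^2 <= 1/4.
   There is no spectral theorem at hand: the operator facts used on the way (B |B| = |B^*| B,
   positivity of a product of commuting positive operators and of the block operator
   [[|B|, B^*]; [B, |B^*|]]) all come from approximate eigenvectors of a negative quadratic
   form, and spectral values are located with the Neumann series. *)

Section RealLemmas.
Variable R : realType.
Implicit Types a b c d K : R.

Lemma ler_sqr_ge0 a b : 0 <= b -> a ^+ 2 <= b ^+ 2 -> a <= b.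
Proof. by move=> b0 h; nra. Qed.

Lemma eq_sqr_ge0 a b : 0 <= a -> 0 <= b -> a ^+ 2 = b ^+ 2 -> a = b.
Proof. by move=> a0 b0 /eqP; rewrite eqrXn2 // => /eqP. Qed.

Lemma le_addr_eps a b : (forall e, 0 < e -> a <= b + e) -> a <= b.
Proof.
move=> h; rewrite leNgt; apply/negP => ba.
by have := h ((a - b) / 2); rewrite divr_gt0 ?subr_gt0 // => /(_ isT); lra.
Qed.

Lemma discriminant_le a b c : 0 <= c ->
  (forall t, 0 <= a + 2 * t * b + t ^+ 2 * c) -> b ^+ 2 <= a * c.
Proof.
move=> c0 h; have [c00|cn0] := eqVneq c 0.
  rewrite c00 in h *; have [->|bn0] := eqVneq b 0; first by rewrite mulr0 expr0n.
  have := h (- (a + 1) / (2 * b)); rewrite mulr0 addr0.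
  have -> : 2 * (- (a + 1) / (2 * b)) * b = - (a + 1) by field; rewrite bn0.
  lra.
have cp : 0 < c by rewrite lt_def cn0 c0.
have := h (- b / c).
have -> : a + 2 * (- b / c) * b + (- b / c) ^+ 2 * c = (a * c - b ^+ 2) / c.
  by field; rewrite gt_eqF.
by rewrite pmulr_lge0 ?invr_gt0 // subr_ge0.
Qed.

Lemma pos_le_vanishing c b K : 0 < c -> 0 < b ->
  ~ (forall d, 0 < d -> d <= b -> c <= K * d).
Proof.
move=> c0 b0 h; pose d := Num.min b (c / (2 * (`|K| + 1))).
have K1 : 0 < `|K| + 1 by rewrite ltr_wpDl.
have d0 : 0 < d by rewrite lt_min b0 divr_gt0 // mulr_gt0.
have := h d d0; rewrite ge_min lexx => /(_ isT).
have dc : d * (2 * (`|K| + 1)) <= c.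
  by rewrite -ler_pdivlMr ?mulr_gt0 // ge_min lexx orbT.
have := ler_norm K; have := normr_ge0 K; nra.
Qed.

Lemma geometric_small e : 0 < e ->
  exists N, forall n, (N <= n)%N -> (2^-1 : R) ^+ n < e.
Proof.
move=> e0.
have pow2_ge : forall n : nat, (n%:R : R) + 1 <= 2 ^+ n.
  elim=> [|n IH]; first by rewrite expr0 add0r.
  by rewrite exprS -natr1; have : 0 <= (n%:R : R) by []; lra.
exists (Num.Def.archi_bound e^-1) => n hn.
have /archi_boundP hN : 0 <= e^-1 by rewrite invr_ge0 ltW.
have hNn : ((Num.Def.archi_bound e^-1)%:R : R) <= n%:R by rewrite ler_nat.
have hn2 := pow2_ge n; have h2 : 0 < (2 : R) ^+ n by rewrite exprn_gt0.
have ee : e * e^-1 = 1 by rewrite mulfV // gt_eqF.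
rewrite exprVn -[X in X < _]mul1r ltr_pdivrMr //; nra.
Qed.

End RealLemmas.

Section ComplexLemmas.
Variable R : realType.
Implicit Types (w : R[i]) (r : R).

Lemma Re_real_mul r w : Re (r%:C * w) = r * Re w.
Proof. by case: w => a b /=; rewrite mul0r subr0. Qed.

Lemma Re_conjc w : Re (conjc w) = Re w. Proof. by case: w. Qed.

Lemma conjc_realc r : conjc r%:C = r%:C.
Proof. by rewrite /= oppr0. Qed.

Lemma conjcD w1 w2 : conjc (w1 + w2) = conjc w1 + conjc w2.
Proof. by case: w1 => ? ?; case: w2 => ? ? /=; rewrite opprD. Qed.

Lemma ge0_complex_real w : 0 <= w -> w = (Re w)%:C /\ 0 <= Re w.
Proof. by case: w => a b; rewrite lecE /= => /andP[/eqP-> a0]. Qed.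

Lemma normc_sqrt w : Normc.normc w = Num.sqrt (Re w ^+ 2 + Im w ^+ 2).
Proof. by case: w. Qed.

Lemma normc_ge0 w : 0 <= Normc.normc w.
Proof. by rewrite normc_sqrt sqrtr_ge0. Qed.

Lemma normc_real r : 0 <= r -> Normc.normc r%:C = r.
Proof. by move=> r0; rewrite normc_sqrt /= expr0n addr0 sqrtr_sqr ger0_norm. Qed.

Lemma mulcJ w : w * conjc w = (Re w ^+ 2 + Im w ^+ 2)%:C.
Proof. by case: w => a b; apply/eqP; rewrite eq_complex /=; apply/andP; split; apply/eqP; ring. Qed.

Lemma rotate_to_real w : exists u : R[i], u * conjc u = 1 /\ Re (u * w) = Normc.normc w.
Proof.
have [->|wn0] := eqVneq w 0.
  by exists 1; rewrite rmorph1 mulr1 mulr0 Normc.normc0.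
have s0 : 0 < Normc.normc w.
  by rewrite lt_def normc_ge0 andbT; apply/eqP => /Normc.eq0_normc/eqP; rewrite (negPf wn0).
move: s0; rewrite normc_sqrt; case: w {wn0} => a b /=; set s := Num.sqrt _ => s0.
have s2 : s ^+ 2 = a ^+ 2 + b ^+ 2 by rewrite sqr_sqrtr // addr_ge0 // sqr_ge0.
exists ((a / s) +i* (- b / s)); split.
  apply/eqP; rewrite eq_complex /=; apply/andP; split; apply/eqP; last by field; rewrite gt_eqF.
  transitivity ((a ^+ 2 + b ^+ 2) / s ^+ 2); first by field; rewrite gt_eqF.
  by rewrite -s2 mulfV // expf_neq0 // gt_eqF.
by rewrite /= -[RHS](@mulfK _ s) ?gt_eqF // -expr2 s2; field; rewrite gt_eqF.
Qed.

End ComplexLemmas.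

(** * Inner product spaces *)

Record inner_product (R : realType) (W : lmodType R[i]) (ip : W -> W -> R[i]) : Prop :=
  InnerProduct {
    ip_linearl : forall (a : R[i]) (x y z : W), ip (a *: x + y) z = a * ip x z + ip y z;
    ip_conj : forall x y : W, ip y x = conjc (ip x y);
    ip_ge0 : forall x : W, 0 <= ip x x;
    ip_eq0 : forall x : W, ip x x = 0 -> x = 0 }.

Section InnerProductSpace.
Variables (R : realType) (W : lmodType R[i]) (ip : W -> W -> R[i]).
Hypothesis ipW : inner_product ip.
Local Notation nrm := (hnorm ip).
Implicit Types (x y z : W) (a : R[i]) (r : R).

Lemma ipDl x y z : ip (x + y) z = ip x z + ip y z.
Proof. by have := ip_linearl ipW 1 x y z; rewrite scale1r mul1r. Qed.

Lemma ip0l z : ip 0 z = 0.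
Proof. by apply: (addrI (ip 0 z)); rewrite -ipDl !addr0. Qed.

Lemma ipZl a x z : ip (a *: x) z = a * ip x z.
Proof. by have := ip_linearl ipW a x 0 z; rewrite addr0 ip0l addr0. Qed.

Lemma ipNl x z : ip (- x) z = - ip x z.
Proof. by rewrite -scaleN1r ipZl mulN1r. Qed.

Lemma ipDr z x y : ip z (x + y) = ip z x + ip z y.
Proof. by rewrite !(ip_conj ipW _ z) ipDl rmorphD. Qed.

Lemma ipZr z a x : ip z (a *: x) = conjc a * ip z x.
Proof. by rewrite !(ip_conj ipW _ z) ipZl rmorphM. Qed.

Lemma ip0r z : ip z 0 = 0.
Proof. by rewrite ip_conj // ip0l rmorph0. Qed.

Definition rdot x y := Re (ip x y).

Lemma rdotDl x y z : rdot (x + y) z = rdot x z + rdot y z.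
Proof. by rewrite /rdot ipDl raddfD. Qed.
Lemma rdotDr z x y : rdot z (x + y) = rdot z x + rdot z y.
Proof. by rewrite /rdot ipDr raddfD. Qed.
Lemma rdotZl r x z : rdot (r%:C *: x) z = r * rdot x z.
Proof. by rewrite /rdot ipZl Re_real_mul. Qed.
Lemma rdotZr r z x : rdot z (r%:C *: x) = r * rdot z x.
Proof. by rewrite /rdot ipZr conjc_realc Re_real_mul. Qed.
Lemma rdotNl x z : rdot (- x) z = - rdot x z.
Proof. by rewrite /rdot ipNl raddfN. Qed.
Lemma rdotNr z x : rdot z (- x) = - rdot z x.
Proof. by rewrite -scaleN1r -(rmorphN1 (real_complex R)) rdotZr mulN1r. Qed.
Lemma rdotBl x y z : rdot (x - y) z = rdot x z - rdot y z.
Proof. by rewrite rdotDl rdotNl. Qed.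
Lemma rdotBr z x y : rdot z (x - y) = rdot z x - rdot z y.
Proof. by rewrite rdotDr rdotNr. Qed.
Lemma rdot0l z : rdot 0 z = 0. Proof. by rewrite /rdot ip0l. Qed.
Lemma rdot0r z : rdot z 0 = 0. Proof. by rewrite /rdot ip0r. Qed.
Lemma rdotC x y : rdot x y = rdot y x.
Proof. by rewrite /rdot (ip_conj ipW x y) Re_conjc. Qed.

Lemma ipxx x : ip x x = (rdot x x)%:C.
Proof. by case: (ge0_complex_real (ip_ge0 ipW x)). Qed.
Lemma rdotxx_ge0 x : 0 <= rdot x x.
Proof. by case: (ge0_complex_real (ip_ge0 ipW x)). Qed.
Lemma rdotxx_eq0 x : rdot x x = 0 -> x = 0.
Proof. by move=> x0; apply: (ip_eq0 ipW); rewrite ipxx x0. Qed.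

Lemma hnorm_ge0 x : 0 <= nrm x. Proof. exact: sqrtr_ge0. Qed.
Lemma hnorm_sqr x : nrm x ^+ 2 = rdot x x.
Proof. by rewrite sqr_sqrtr // rdotxx_ge0. Qed.
Lemma hnorm_eq0 x : nrm x = 0 -> x = 0.
Proof. by move=> x0; apply: rdotxx_eq0; rewrite -hnorm_sqr x0 expr0n. Qed.
Lemma hnorm0 : nrm 0 = 0. Proof. by rewrite /hnorm -/(rdot 0 0) rdot0l sqrtr0. Qed.
Lemma hnorm_gt0 x : x != 0 -> 0 < nrm x.
Proof. by move=> x0; rewrite lt_def hnorm_ge0 andbT; apply: contraNneq x0 => /hnorm_eq0 ->. Qed.

Section SymmetricForm.
Variable f : W -> W -> R.
Hypothesis fDl : forall x y z, f (x + y) z = f x z + f y z.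
Hypothesis fZl : forall r x z, f (r%:C *: x) z = r * f x z.
Hypothesis fC : forall x y, f x y = f y x.
Hypothesis f_ge0 : forall x, 0 <= f x x.

Lemma form_cauchy_schwarz x y : f x y ^+ 2 <= f x x * f y y.
Proof.
have fDr u v w : f u (v + w) = f u v + f u w by rewrite fC fDl !(fC u).
have fZr r u v : f u (r%:C *: v) = r * f u v by rewrite fC fZl fC.
apply: discriminant_le => // t; have := f_ge0 (x + t%:C *: y).
rewrite fDl !fDr !fZl !fZr (fC y x).
by congr (0 <= _); ring.
Qed.
End SymmetricForm.

Lemma rdot_le x y : rdot x y <= nrm x * nrm y.
Proof.
apply: ler_sqr_ge0; first by rewrite mulr_ge0 ?hnorm_ge0.
rewrite exprMn !hnorm_sqr; apply: form_cauchy_schwarz.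
- exact: rdotDl.
- exact: rdotZl.
- exact: rdotC.
- exact: rdotxx_ge0.
Qed.

Lemma ler_hnormD x y : nrm (x + y) <= nrm x + nrm y.
Proof.
apply: ler_sqr_ge0; first by rewrite addr_ge0 ?hnorm_ge0.
rewrite hnorm_sqr rdotDl !rdotDr (rdotC y x) -!hnorm_sqr.
by have := rdot_le x y; nra.
Qed.

Lemma hnormZ a x : nrm (a *: x) = Normc.normc a * nrm x.
Proof.
apply: eq_sqr_ge0; rewrite ?hnorm_ge0 ?mulr_ge0 ?normc_ge0 ?hnorm_ge0 //.
rewrite exprMn !hnorm_sqr normc_sqrt sqr_sqrtr ?addr_ge0 ?sqr_ge0 //.
by rewrite /rdot ipZl ipZr mulrA mulcJ Re_real_mul.
Qed.

Lemma hnormZr r x : nrm (r%:C *: x) = `|r| * nrm x.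
Proof. by rewrite hnormZ normc_sqrt /= expr0n addr0 sqrtr_sqr. Qed.

Lemma hnorm_opp x : nrm (- x) = nrm x.
Proof. by rewrite -scaleN1r -(rmorphN1 (real_complex R)) hnormZr normrN1 mul1r. Qed.

Lemma ler_hnormB x y : nrm (x - y) <= nrm x + nrm y.
Proof. by rewrite -(hnorm_opp y) ler_hnormD. Qed.

Lemma hnorm_normalize x : x != 0 -> nrm ((nrm x)^-1%:C *: x) = 1.
Proof.
by move=> x0; rewrite hnormZr ger0_norm ?invr_ge0 ?hnorm_ge0 // mulVf // gt_eqF // hnorm_gt0.
Qed.

(** * Positive operators *)

Definition lin_op (A : W -> W) := forall a x y, A (a *: x + y) = a *: A x + A y.
(* For complex-linear [A] this is self-adjointness, since [Im <u, v> = Re <u, 'i v>]. *)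
Definition selfadj (A : W -> W) := forall x y, rdot (A x) y = rdot x (A y).
Definition psd (A : W -> W) := forall x, 0 <= rdot (A x) x.
Definition bounded_by (A : W -> W) (K : R) := forall x, nrm (A x) <= K * nrm x.
Definition posop (A : W -> W) (K : R) :=
  [/\ lin_op A, selfadj A, psd A, 0 <= K & bounded_by A K].

Section LinearOperator.
Variable A : W -> W.
Hypothesis lA : lin_op A.

Lemma lin_opD x y : A (x + y) = A x + A y.
Proof. by have := lA 1 x y; rewrite !scale1r. Qed.
Lemma lin_op0 : A 0 = 0.
Proof. by apply: (addrI (A 0)); rewrite -lin_opD !addr0. Qed.
Lemma lin_opZ a x : A (a *: x) = a *: A x.
Proof. by have := lA a x 0; rewrite !addr0 lin_op0 addr0. Qed.
Lemma lin_opN x : A (- x) = - A x.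
Proof. by rewrite -scaleN1r lin_opZ scaleN1r. Qed.
Lemma lin_opB x y : A (x - y) = A x - A y.
Proof. by rewrite lin_opD lin_opN. Qed.

Lemma rdot_scale_quad r x : rdot (A (r%:C *: x)) (r%:C *: x) = r ^+ 2 * rdot (A x) x.
Proof. by rewrite lin_opZ rdotZl rdotZr mulrA -expr2. Qed.

Lemma rdot_unimodular u x : u * conjc u = 1 -> rdot (A (u *: x)) (u *: x) = rdot (A x) x.
Proof. by move=> uu; rewrite lin_opZ /rdot ipZl ipZr mulrA uu mul1r. Qed.

End LinearOperator.

Lemma lin_op_scale c : lin_op (fun x => c *: x).
Proof. by move=> a x y; rewrite scalerDr !scalerA mulrC. Qed.

Lemma lin_op_opp A : lin_op A -> lin_op (fun x => - A x).
Proof. by move=> lA a x y; rewrite lA opprD scalerN. Qed.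

Lemma lin_op_comp A1 A2 : lin_op A1 -> lin_op A2 -> lin_op (fun x => A1 (A2 x)).
Proof. by move=> l1 l2 a x y; rewrite l2 l1. Qed.

Lemma lin_op_sub A1 A2 : lin_op A1 -> lin_op A2 -> lin_op (fun x => A1 x - A2 x).
Proof. by move=> l1 l2 a x y; rewrite l1 l2 scalerBr opprD addrACA. Qed.

Lemma bounded_by_comp A1 A2 K1 K2 : 0 <= K1 -> bounded_by A1 K1 -> bounded_by A2 K2 ->
  bounded_by (fun x => A1 (A2 x)) (K1 * K2).
Proof. by move=> K10 b1 b2 x; apply: le_trans (b1 _) _; rewrite -mulrA ler_wpM2l. Qed.

Lemma bounded_by_sub A1 A2 K1 K2 : bounded_by A1 K1 -> bounded_by A2 K2 ->
  bounded_by (fun x => A1 x - A2 x) (K1 + K2).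
Proof. by move=> b1 b2 x; apply: le_trans (ler_hnormB _ _) _; rewrite mulrDl lerD. Qed.

Lemma bounded_by_le A K K' : bounded_by A K -> K <= K' -> bounded_by A K'.
Proof. by move=> bA KK' x; apply: le_trans (bA x) _; rewrite ler_wpM2r ?hnorm_ge0. Qed.

Lemma rdot_bounded A K y : bounded_by A K -> rdot (A y) y <= K * nrm y ^+ 2.
Proof.
move=> bA; apply: le_trans (rdot_le _ _) _.
by rewrite expr2 mulrA ler_wpM2r ?hnorm_ge0.
Qed.

Lemma selfadj_cauchy_schwarz A : lin_op A -> selfadj A -> psd A ->
  forall x y, rdot (A x) y ^+ 2 <= rdot (A x) x * rdot (A y) y.
Proof.
move=> lA sA pA x y; apply: (@form_cauchy_schwarz (fun u v => rdot (A u) v)) => //=.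
- by move=> u v w; rewrite lin_opD // rdotDl.
- by move=> r u v; rewrite lin_opZ // rdotZl.
- by move=> u v; rewrite sA rdotC.
Qed.

Section PositiveOperator.
Variables (A : W -> W) (K : R).
Hypothesis pA : posop A K.

(* Cauchy-Schwarz for the form [rdot (A _) _], applied to [x] and [A x]. *)
Lemma posop_norm_sqr x : nrm (A x) ^+ 2 <= K * rdot (A x) x.
Proof.
case: pA => lA sA psdA K0 bA.
have CS := selfadj_cauchy_schwarz lA sA psdA x (A x); rewrite -hnorm_sqr in CS.
have AAx : rdot (A (A x)) (A x) <= K * nrm (A x) ^+ 2 by exact: rdot_bounded.
have := psdA x; have := hnorm_ge0 (A x).
set n := nrm (A x) in CS AAx *; set q := rdot (A x) x => n0 q0.
have [->|nn0] := eqVneq n 0; first by rewrite expr0n mulr_ge0.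
have n2 : 0 < n ^+ 2 by rewrite exprn_gt0 // lt_def nn0 n0.
rewrite -(ler_pM2l n2); nra.
Qed.

Lemma posop_rdot_eq0 x : rdot (A x) x = 0 -> A x = 0.
Proof.
move=> Ax0; apply: hnorm_eq0; apply/eqP; rewrite -sqrf_eq0 eq_le sqr_ge0 andbT.
by have := posop_norm_sqr x; rewrite Ax0 mulr0.
Qed.

End PositiveOperator.

Lemma rayleigh_lower_bound A c : lin_op A ->
  (forall v, nrm v = 1 -> c <= rdot (A v) v) -> forall x, c * nrm x ^+ 2 <= rdot (A x) x.
Proof.
move=> lA cA x; have [->|x0] := eqVneq x 0.
  by rewrite hnorm0 expr0n mulr0 lin_op0 // rdot0l.
have := cA _ (hnorm_normalize x0); rewrite rdot_scale_quad // exprVn.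
by rewrite ler_pdivlMl ?exprn_gt0 ?hnorm_gt0 // mulrC.
Qed.

(* [A - c] is positive, so [posop_norm_sqr] bounds its defect on [v]. *)
Lemma approx_eigen_sqr A K c : lin_op A -> selfadj A -> 0 <= K -> bounded_by A K ->
  (forall x, c * nrm x ^+ 2 <= rdot (A x) x) ->
  forall v e, nrm v = 1 -> rdot (A v) v <= c + e ->
  nrm (A v - c%:C *: v) ^+ 2 <= (K + `|c|) * e.
Proof.
move=> lA sA K0 bA cA v e v1 Ave.
pose D x := A x - c%:C *: x.
have pD : posop D (K + `|c|).
  split.
  - exact: lin_op_sub (lin_op_scale _).
  - by move=> x y; rewrite /D rdotBl rdotBr rdotZl rdotZr sA.
  - by move=> x; rewrite /D rdotBl rdotZl -hnorm_sqr subr_ge0.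
  - by rewrite addr_ge0.
  - by move=> x; rewrite /D; apply: le_trans (ler_hnormB _ _) _; rewrite hnormZr mulrDl lerD2r.
apply: le_trans (posop_norm_sqr pD v) _.
rewrite /D rdotBl rdotZl -hnorm_sqr v1 expr1n mulr1 ler_wpM2l ?addr_ge0 //; lra.
Qed.

Lemma negative_approx_eigen A K : lin_op A -> selfadj A -> 0 <= K -> bounded_by A K ->
  forall v0, rdot (A v0) v0 < 0 ->
  exists c, c < 0 /\ forall d, 0 < d -> exists v, [/\ nrm v = 1,
    rdot (A v) v <= c + d & nrm (A v - c%:C *: v) <= d].
Proof.
move=> lA sA K0 bA v0 Av0.
have v00 : v0 != 0 by apply: contraTneq Av0 => ->; rewrite lin_op0 // rdot0l ltxx.
set u0 := (nrm v0)^-1%:C *: v0; have u01 := hnorm_normalize v00.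
have Au0 : rdot (A u0) u0 < 0.
  by rewrite rdot_scale_quad // pmulr_rlt0 // exprn_gt0 // invr_gt0 hnorm_gt0.
pose S (s : R) := exists v, nrm v = 1 /\ s = - rdot (A v) v.
have supS : has_sup S.
  split; first by exists (- rdot (A u0) u0), u0.
  exists K => _ [v [v1 ->]]; rewrite -rdotNr; apply: le_trans (rdot_le _ _) _.
  by rewrite hnorm_opp v1 mulr1 -[K]mulr1 -v1 bA.
(* [c] is the bottom of the numerical range of [A]. *)
set c := - sup S.
have cA v : nrm v = 1 -> c <= rdot (A v) v.
  by move=> v1; rewrite /c lerNl; apply: sup_upper_bound => //; exists v.
have c0 : c < 0 by apply: le_lt_trans (cA _ u01) Au0.
exists c; split => // d d0.
pose M := K + `|c| + 1 + d; pose e := d ^+ 2 / M.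
have M0 : 0 < M by rewrite /M; have := normr_ge0 c; lra.
have e0 : 0 < e by rewrite divr_gt0 // exprn_gt0.
have eM : e * M = d ^+ 2 by rewrite mulfVK // gt_eqF.
have [_ [v [v1 ->]] Sv] := sup_adherent e0 supS.
have Ave : rdot (A v) v <= c + e by rewrite /c; lra.
exists v; split => //.
  apply: le_trans Ave _; rewrite lerD2l -(ler_pM2r M0) eM /M.
  by have := normr_ge0 c; nra.
apply: ler_sqr_ge0; first exact: ltW.
apply: le_trans (approx_eigen_sqr lA sA K0 bA (rayleigh_lower_bound lA cA) v1 Ave) _.
by rewrite -eM /M; have := normr_ge0 c; nra.
Qed.

Lemma posop_commute_psd X Y KX KY : posop X KX -> posop Y KY ->
  (forall v, X (Y v) = Y (X v)) -> psd (fun v => X (Y v)).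
Proof.
move=> [lX sX pX KX0 bX] pY XY v0; have [lY sY pY' KY0 bY] := pY.
pose A v := X (Y v).
have lA : lin_op A by exact: lin_op_comp.
have sA : selfadj A by move=> x y; rewrite /A sX sY XY.
have bA : bounded_by A (KX * KY) by exact: bounded_by_comp.
rewrite leNgt; apply/negP => /(negative_approx_eigen lA sA (mulr_ge0 KX0 KY0) bA).
case=> c [c0 eigen]; set a := - c; have a0 : 0 < a by rewrite oppr_gt0.
apply: (pos_le_vanishing (c := a ^+ 3 / 4) (b := a / 2) (K := KX ^+ 2 * KY ^+ 2)).
- by rewrite divr_gt0 // exprn_gt0.
- by rewrite divr_gt0.
move=> d d0 da; have [v [v1 _ defect]] := eigen d d0.
set w := A v - c%:C *: v in defect.
set t := rdot (Y v) v; have t0 : 0 <= t := pY' v.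
have Yv_le : nrm (Y v) <= KY by rewrite -[KY]mulr1 -v1 bY.
(* [0 <= <X Y v, Y v>] while [X Y v] is nearly [c v] with [c < 0]. *)
have at_le : a * t <= d * KY.
  have : rdot (A v) (Y v) <= c * t + d * KY.
    rewrite -[A v](subrK (c%:C *: v)) -/w rdotDl rdotZl (rdotC v) -/t addrC lerD2l.
    by apply: le_trans (rdot_le _ _) _; rewrite ler_pM ?hnorm_ge0.
  by have := pX (Y v); rewrite /a; lra.
have Yv_sqr : nrm (Y v) ^+ 2 <= KY * t := posop_norm_sqr pY v.
have Av_le : nrm (A v) <= KX * nrm (Y v) := bX (Y v).
have a_le : a <= nrm (A v) + d.
  have : nrm (c%:C *: v) <= nrm (A v) + nrm w.
    have -> : c%:C *: v = A v - w by rewrite /w opprB addrCA subrr addr0.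
    exact: ler_hnormB.
  by rewrite hnormZr v1 mulr1 ler0_norm ?(ltW c0) // -/a; lra.
have := hnorm_ge0 (Y v); have := hnorm_ge0 (A v); have := sqr_ge0 KX.
set y := nrm (Y v) in Yv_le Yv_sqr Av_le *; set z := nrm (A v) in Av_le a_le * => ? ? ?.
have ad2 : (a / 2) ^+ 2 <= KX ^+ 2 * y ^+ 2 by rewrite -exprMn; nra.
have -> : a ^+ 3 / 4 = a * (a / 2) ^+ 2 by field.
have -> : KX ^+ 2 * KY ^+ 2 * d = KX ^+ 2 * KY * (d * KY) by ring.
apply: le_trans (_ : _ <= KX ^+ 2 * KY * (a * t)) _; last by rewrite ler_wpM2l ?mulr_ge0.
have -> : KX ^+ 2 * KY * (a * t) = a * (KX ^+ 2 * (KY * t)) by ring.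
by rewrite ler_pM2l //; apply: le_trans ad2 _; rewrite ler_wpM2l.
Qed.

(* A negative approximate eigenvector of [F] is nearly in the range of [F], hence
   nearly killed by [G]. *)
Lemma psd_of_annihilated F G KF KG : lin_op F -> selfadj F -> 0 <= KF -> bounded_by F KF ->
  lin_op G -> 0 <= KG -> bounded_by G KG -> (forall v, G (F v) = 0) ->
  (forall v, 0 <= rdot (F v) v + rdot (G v) v) -> psd F.
Proof.
move=> lF sF KF0 bF lG KG0 bG GF FG_ge0 v0.
rewrite leNgt; apply/negP => /(negative_approx_eigen lF sF KF0 bF).
case=> c [c0 eigen]; set a := - c; have a0 : 0 < a by rewrite oppr_gt0.
apply: (pos_le_vanishing (c := a ^+ 2 / 2) (b := a / 2) (K := KG)).
- by rewrite divr_gt0 // exprn_gt0.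
- by rewrite divr_gt0.
move=> d d0 da; have [v [v1 Fv defect]] := eigen d d0.
have Gv_le : a * nrm (G v) <= KG * d.
  have cGv : c%:C *: G v = - G (F v - c%:C *: v) by rewrite lin_opB // GF sub0r opprK lin_opZ.
  have := congr1 nrm cGv; rewrite hnormZr hnorm_opp ler0_norm ?(ltW c0) // -/a => ->.
  by apply: le_trans (bG _) _; rewrite ler_wpM2l.
have Gv_rdot : rdot (G v) v <= nrm (G v) by rewrite -[nrm (G v)]mulr1 -v1 rdot_le.
have := FG_ge0 v; have := hnorm_ge0 (G v); set g := nrm (G v) in Gv_le Gv_rdot * => g0 FG0.
have ca : c = - a by rewrite /a opprK.
have ag : a / 2 <= g by lra.
have : a * (a / 2) <= a * g by rewrite ler_pM2l.
by rewrite mulrA -expr2; lra.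
Qed.

Definition radjoint (B Bs : W -> W) := forall x y, rdot (B x) y = rdot x (Bs y).

Lemma radjoint_sym B Bs : radjoint B Bs -> radjoint Bs B.
Proof. by move=> BBs x y; rewrite rdotC -BBs rdotC. Qed.

Lemma radjoint_bounded B Bs K : radjoint B Bs -> 0 <= K -> bounded_by B K -> bounded_by Bs K.
Proof.
move=> BBs K0 bB x; have := hnorm_ge0 (Bs x); have [->|/hnorm_gt0 n0 _] := eqVneq (Bs x) 0.
  by rewrite hnorm0 mulr_ge0 ?hnorm_ge0.
have : nrm (Bs x) ^+ 2 <= K * nrm (Bs x) * nrm x.
  rewrite hnorm_sqr -BBs; apply: le_trans (rdot_le _ _) _.
  by rewrite ler_wpM2r ?hnorm_ge0.
by rewrite expr2 -mulrA mulrCA ler_pM2l.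
Qed.

Section AbsoluteValue.
Variables (B Bs P Q : W -> W) (KB KP KQ : R).
Hypotheses (lB : lin_op B) (lBs : lin_op Bs) (BBs : radjoint B Bs).
Hypotheses (KB0 : 0 <= KB) (bB : bounded_by B KB).
Hypotheses (pP : posop P KP) (pQ : posop Q KQ).
Hypotheses (PP : forall x, P (P x) = Bs (B x)) (QQ : forall x, Q (Q x) = B (Bs x)).

(* [P = |B|] and [Q = |B^*|]: the defect [X = Q B - B P] satisfies [Q X = - X P];
   positivity of [P X^* X] then forces [Q X = 0] and finally [X = 0]. *)
Lemma abs_intertwine x : B (P x) = Q (B x).
Proof.
have [lP sP pP' KP0 bP] := pP; have [lQ sQ pQ' KQ0 bQ] := pQ.
have bBs := radjoint_bounded BBs KB0 bB.
pose X x := Q (B x) - B (P x); pose Xs x := Bs (Q x) - P (Bs x).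
have lX : lin_op X by apply: lin_op_sub; apply: lin_op_comp.
have lXs : lin_op Xs by apply: lin_op_sub; apply: lin_op_comp.
have XXs : radjoint X Xs.
  by move=> u v; rewrite /X /Xs rdotBl rdotBr BBs sQ BBs -sP.
have QX u : Q (X u) = - X (P u) by rewrite /X lin_opB // QQ -PP opprB.
have PXs u : P (Xs u) = - Xs (Q u) by rewrite /Xs lin_opB // PP -QQ opprB.
pose XsX u := Xs (X u).
have KXsX : 0 <= (KB * KQ + KP * KB) * (KQ * KB + KB * KP) by rewrite mulr_ge0 ?addr_ge0 ?mulr_ge0.
have pXsX : posop XsX ((KB * KQ + KP * KB) * (KQ * KB + KB * KP)).
  split => //.
  - exact: lin_op_comp.
  - by move=> u v; rewrite /XsX (radjoint_sym XXs) XXs.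
  - by move=> u; rewrite /XsX (radjoint_sym XXs) -hnorm_sqr sqr_ge0.
  - by apply: bounded_by_comp; rewrite ?addr_ge0 ?mulr_ge0 //;
      apply: bounded_by_sub; apply: bounded_by_comp.
have P_XsX : psd (fun u => P (XsX u)).
  by apply: (posop_commute_psd pP pXsX) => u; rewrite /XsX PXs QX lin_opN // opprK.
have QX0 u : Q (X u) = 0.
  apply: (posop_rdot_eq0 pQ); apply/eqP; rewrite eq_le pQ' andbT.
  by rewrite QX rdotNl XXs sP rdotC oppr_le0; exact: P_XsX.
have Xs0 u : Q u = 0 -> Xs u = 0.
  move=> Qu0; have PXs0 : P (Xs u) = 0 by rewrite PXs Qu0 (lin_op0 lXs) oppr0.
  have defXs : Xs u = - P (Bs u) by rewrite /Xs Qu0 (lin_op0 lBs) sub0r.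
  by apply: rdotxx_eq0; rewrite {1}defXs rdotNl sP PXs0 rdot0r oppr0.
by apply/eqP; rewrite eq_sym -subr_eq0 -/(X x); apply/eqP/rdotxx_eq0; rewrite XXs Xs0 ?rdot0r.
Qed.

Lemma abs_intertwine_adj x : P (Bs x) = Bs (Q x).
Proof.
have [lP sP _ _ _] := pP; have [lQ sQ _ _ _] := pQ.
apply/eqP; rewrite -subr_eq0; apply/eqP/rdotxx_eq0.
by rewrite rdotBl sP (radjoint_sym BBs) (radjoint_sym BBs) sQ abs_intertwine subrr.
Qed.

End AbsoluteValue.

(* The cross term of [|(P + Q) x|^2] is controlled by Cauchy-Schwarz for [Q]. *)
Lemma posop_add_rdot_le P Q m r : posop P m -> posop Q m -> 0 <= r ->
  (forall x, rdot (Q (P x)) (P x) <= r * rdot (P x) x) ->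
  forall x, rdot (P x) x + rdot (Q x) x <= (m + Num.sqrt r) * nrm x ^+ 2.
Proof.
move=> pP pQ r0 QP x; have [_ _ pP' m0 _] := pP; have [lQ sQ pQ' _ _] := pQ.
have a0 := pP' x; have b0 := pQ' x.
set a := rdot (P x) x in a0 *; set b := rdot (Q x) x in b0 *.
set rho := Num.sqrt r; have rho0 : 0 <= rho := sqrtr_ge0 r.
have rho2 : rho ^+ 2 = r by rewrite sqr_sqrtr.
have PQx_sqr : nrm (P x + Q x) ^+ 2 = nrm (P x) ^+ 2 + 2 * rdot (Q x) (P x) + nrm (Q x) ^+ 2.
  by rewrite !hnorm_sqr rdotDl !rdotDr (rdotC (P x) (Q x)); ring.
have cross : 2 * rdot (Q x) (P x) <= rho * (a + b).
  have CS : rdot (Q x) (P x) ^+ 2 <= b * (r * a).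
    by apply: le_trans (selfadj_cauchy_schwarz lQ sQ pQ' x (P x)) _; rewrite ler_wpM2l.
  apply: ler_sqr_ge0; first by rewrite mulr_ge0 // addr_ge0.
  by rewrite !exprMn rho2; have := mulr_ge0 r0 (sqr_ge0 (a - b)); nra.
have ab_le : a + b <= nrm (P x + Q x) * nrm x by rewrite /a /b -rdotDl rdot_le.
have := posop_norm_sqr pP x; have := posop_norm_sqr pQ x.
have := hnorm_ge0 x; have := hnorm_ge0 (P x + Q x).
set N := nrm (P x + Q x) in PQx_sqr ab_le *; set n := nrm x in ab_le * => N0 n0 hQ hP.
have ab2 : (a + b) ^+ 2 <= (m + rho) * (a + b) * n ^+ 2.
  apply: le_trans (_ : _ <= N ^+ 2 * n ^+ 2) _.
    have : 0 <= a + b by rewrite addr_ge0.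
    by rewrite -exprMn; nra.
  by rewrite ler_wpM2r ?sqr_ge0 // PQx_sqr; lra.
have [->|ab0] := eqVneq (a + b) 0; first by rewrite mulr_ge0 ?addr_ge0 ?sqr_ge0.
have ab_gt0 : 0 < a + b by rewrite lt_def ab0 addr_ge0.
by rewrite -(ler_pM2l ab_gt0); nra.
Qed.

(** * Neumann series and the spectral radius *)

Definition tends_to (u : nat -> W) (l : W) :=
  forall e, 0 < e -> exists N, forall n, (N <= n)%N -> nrm (u n - l) < e.

Definition cauchy_seq (u : nat -> W) :=
  forall e, 0 < e -> exists N, forall m n, (N <= m)%N -> (N <= n)%N -> nrm (u m - u n) < e.

Definition complete_space := forall u, cauchy_seq u -> exists l, tends_to u l.

Lemma tends_to_unique u l l' : tends_to u l -> tends_to u l' -> l = l'.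
Proof.
move=> ul ul'; apply/eqP; rewrite -subr_eq0; apply/eqP/hnorm_eq0.
apply/eqP; rewrite eq_le hnorm_ge0 andbT; apply: le_addr_eps => e e0; rewrite add0r.
have e20 : 0 < e / 2 by rewrite divr_gt0.
have [N1 hN1] := ul _ e20; have [N2 hN2] := ul' _ e20.
have := hN1 (maxn N1 N2) (leq_maxl _ _); have := hN2 (maxn N1 N2) (leq_maxr _ _).
set v := u (maxn N1 N2) => h2 h1.
have -> : l - l' = (v - l') - (v - l) by rewrite opprB [in RHS]addrC addrA subrK.
by apply: le_trans (ler_hnormB _ _) _; lra.
Qed.

Lemma tends_to_lin u v l m a :
  tends_to u l -> tends_to v m -> tends_to (fun n => a *: u n + v n) (a *: l + m).
Proof.
move=> ul vm e e0; set k := Normc.normc a + 1.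
have k0 : 0 < k by rewrite /k ltr_wpDl ?normc_ge0.
have e2k : 0 < e / 2 / k by rewrite !divr_gt0.
have [N1 hN1] := ul _ e2k; have [N2 hN2] := vm (e / 2) (divr_gt0 e0 (ltr0Sn _ 1)).
exists (maxn N1 N2) => n hn.
have h1 := hN1 n (leq_trans (leq_maxl _ _) hn).
have h2 := hN2 n (leq_trans (leq_maxr _ _) hn).
have -> : a *: u n + v n - (a *: l + m) = a *: (u n - l) + (v n - m).
  by rewrite scalerBr opprD addrACA.
apply: le_lt_trans (ler_hnormD _ _) _; rewrite hnormZ.
have : Normc.normc a * nrm (u n - l) <= k * nrm (u n - l).
  by rewrite ler_wpM2r ?hnorm_ge0 // lerDl.
have : k * nrm (u n - l) < e / 2 by rewrite -ltr_pdivlMl // mulrC.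
lra.
Qed.

Lemma tends_to_geometric u l C : 0 <= C ->
  (forall n, nrm (u n - l) <= C * (2^-1) ^+ n) -> tends_to u l.
Proof.
move=> C0 ul e e0; have C1 : 0 < C + 1 by rewrite ltr_wpDl.
have [N hN] := geometric_small (divr_gt0 e0 C1).
exists N => n hn; apply: le_lt_trans (ul n) _.
apply: le_lt_trans (_ : _ <= (C + 1) * (2^-1) ^+ n) _.
  by rewrite ler_wpM2r ?exprn_ge0 ?invr_ge0 // lerDl.
by rewrite mulrC -ltr_pdivlMr // hN.
Qed.

Lemma tends_to_op A K u l : lin_op A -> 0 <= K -> bounded_by A K ->
  tends_to u l -> tends_to (fun n => A (u n)) (A l).
Proof.
move=> lA K0 bA ul e e0; have K1 : 0 < K + 1 by rewrite ltr_wpDl.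
have [N hN] := ul _ (divr_gt0 e0 K1); exists N => n hn.
rewrite -lin_opB //; apply: le_lt_trans (bA _) _.
apply: le_lt_trans (_ : _ <= (K + 1) * nrm (u n - l)) _.
  by rewrite ler_wpM2r ?hnorm_ge0 // lerDl.
by rewrite mulrC -ltr_pdivlMr // hN.
Qed.

Section Neumann.
Hypothesis complete : complete_space.
Variable T : W -> W.
Hypotheses (lT : lin_op T) (bT : bounded_by T (2^-1)).

Let half_ge0 : 0 <= (2^-1 : R). Proof. by rewrite invr_ge0. Qed.

Fixpoint neumann_sum (n : nat) (x : W) : W :=
  if n is n'.+1 then x + T (neumann_sum n' x) else 0.
Local Notation S := neumann_sum.

Let S_lin n a x y : S n (a *: x + y) = a *: S n x + S n y.
Proof.
elim: n => [|n IH] /=; first by rewrite scaler0 addr0.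
by rewrite IH lT scalerDr addrACA.
Qed.

Let S_step x n : nrm (S n.+1 x - S n x) <= nrm x * (2^-1) ^+ n.
Proof.
elim: n => [|n IH]; first by rewrite /= subr0 lin_op0 // addr0 expr0 mulr1.
have -> : S n.+2 x - S n.+1 x = T (S n.+1 x - S n x).
  by rewrite lin_opB // [S n.+2 x]/= [S n.+1 x in RHS]/= opprD addrACA subrr add0r.
apply: le_trans (bT _) _; rewrite exprS mulrCA ler_wpM2l //.
Qed.

Let S_tail x n k : nrm (S (n + k) x - S n x) <= 2 * nrm x * ((2^-1) ^+ n - (2^-1) ^+ (n + k)).
Proof.
elim: k => [|k IH]; first by rewrite addn0 !subrr hnorm0 mulr0.
rewrite addnS; have -> : S (n + k).+1 x - S n x =
    (S (n + k).+1 x - S (n + k) x) + (S (n + k) x - S n x) by rewrite addrA subrK.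
apply: le_trans (ler_hnormD _ _) _; move: IH (S_step x (n + k)).
have -> : (2^-1 : R) ^+ (n + k) = 2 * (2^-1) ^+ (n + k).+1.
  by rewrite exprS mulrA mulfV ?pnatr_eq0 // mul1r.
lra.
Qed.

Let S_cauchy x : cauchy_seq (S^~ x).
Proof.
have tail N m : (N <= m)%N -> nrm (S m x - S N x) <= 2 * nrm x * (2^-1) ^+ N.
  move=> Nm; have := S_tail x N (m - N); rewrite subnKC //.
  have : 0 <= 2 * nrm x * (2^-1) ^+ m by rewrite !mulr_ge0 ?hnorm_ge0 ?exprn_ge0.
  lra.
move=> e e0; have c0 : 0 < 4 * nrm x + 1 by rewrite ltr_wpDl ?mulr_ge0 ?hnorm_ge0.
have [N hN] := geometric_small (divr_gt0 e0 c0); exists N => m n Nm Nn.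
have -> : S m x - S n x = (S m x - S N x) - (S n x - S N x) by rewrite opprB addrA subrK.
apply: le_lt_trans (ler_hnormB _ _) _.
have := tail _ _ Nm; have := tail _ _ Nn; have := hN N (leqnn N).
rewrite ltr_pdivlMr // => h; have := hnorm_ge0 x; nra.
Qed.

Definition neumann_inv (x : W) : W := projT1 (cid (complete (S_cauchy x))).

Let S_lim x : tends_to (S^~ x) (neumann_inv x).
Proof. exact: projT2 (cid (complete (S_cauchy x))). Qed.

Let lin_inv : lin_op neumann_inv.
Proof.
move=> a x y; apply: (tends_to_unique (S_lim (a *: x + y))).
have -> : S^~ (a *: x + y) = fun n => a *: S n x + S n y by apply: funext => n; rewrite S_lin.
exact: tends_to_lin.
Qed.

Let bounded_inv : bounded_by neumann_inv 2.
Proof.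
have S_le n x : nrm (S n x) <= 2 * nrm x.
  elim: n => [|n IH] /=; first by rewrite hnorm0 mulr_ge0 ?hnorm_ge0.
  apply: le_trans (ler_hnormD _ _) _; have := bT (S n x).
  by have := hnorm_ge0 (S n x); nra.
move=> x; apply: le_addr_eps => e e0; have [N hN] := S_lim x e0.
have -> : neumann_inv x = S N x - (S N x - neumann_inv x) by rewrite subKr.
by apply: le_trans (ler_hnormB _ _) _; have := hN N (leqnn N); have := S_le N x; lra.
Qed.

Let inv_right x : neumann_inv x - T (neumann_inv x) = x.
Proof.
have lI : lin_op (fun v => v - T v) by exact: (@lin_op_sub id T (fun _ _ _ => erefl) lT).
have bI : bounded_by (fun v => v - T v) (1 + 2^-1).
  by apply: (@bounded_by_sub id) => // v; rewrite mul1r.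
have := tends_to_op lI (addr_ge0 ler01 half_ge0) bI (S_lim x) => /tends_to_unique; apply.
apply: (tends_to_geometric (hnorm_ge0 x)) => n /=.
have -> : S n x - T (S n x) - x = - (S n.+1 x - S n x) by rewrite [S n.+1 x]/= opprB opprD addrA addrAC.
by rewrite hnorm_opp S_step.
Qed.

Let inv_left x : neumann_inv (x - T x) = x.
Proof.
have S_IT n : S n (x - T x) = x - iter n T x.
  elim: n => [|n IH]; first by rewrite /= subrr.
  by rewrite /= IH lin_opB // addrA subrK.
have iter_le n : nrm (iter n T x) <= nrm x * (2^-1) ^+ n.
  elim: n => [|n IH]; first by rewrite /= expr0 mulr1.
  by rewrite iterS; apply: le_trans (bT _) _; rewrite exprS mulrCA ler_wpM2l.
apply/esym/(tends_to_unique _ (S_lim (x - T x))).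
apply: (tends_to_geometric (hnorm_ge0 x)) => n.
by rewrite S_IT addrAC subrr add0r hnorm_opp.
Qed.

Lemma neumann_invertible : invertible_op ip (fun x => x - T x).
Proof.
exists neumann_inv; split; first by split; [exact: lin_inv | exists 2; exact: bounded_inv].
by split; [exact: inv_right | exact: inv_left].
Qed.

End Neumann.

Lemma invertible_op_scale F c : c != 0 -> invertible_op ip F ->
  invertible_op ip (fun x => c *: F x).
Proof.
move=> c0 [S [[lS [M bS]] [FS SF]]].
exists (fun x => S (c^-1 *: x)); split; last split.
- split; first by move=> a x y; rewrite scalerDr !scalerA mulrC -scalerA lS.
  by exists (M * Normc.normc c^-1) => x; rewrite -mulrA -hnormZ bS.
- by move=> x; rewrite FS scalerA mulfV // scale1r.
- by move=> x /=; rewrite scalerA mulVf // scale1r SF.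
Qed.

Lemma resolvent_invertible (complete : complete_space) A K lam :
  lin_op A -> 0 <= K -> bounded_by A K -> 2 * K + 1 <= Normc.normc lam ->
  invertible_op ip (fun x => lam *: x - A x).
Proof.
move=> lA K0 bA Klam; have lam0 : 0 < Normc.normc lam by lra.
have lamn0 : lam != 0 by apply: contraTneq lam0 => ->; rewrite Normc.normc0 ltxx.
pose T x := lam^-1 *: A x.
have bT : bounded_by T (2^-1).
  move=> x; rewrite /T hnormZ Normc.normcV; apply: le_trans (_ : _ <= (Normc.normc lam)^-1 * (K * nrm x)) _.
    by rewrite ler_wpM2l ?invr_ge0 ?normc_ge0 ?bA.
  rewrite mulrA ler_wpM2r ?hnorm_ge0 // mulrC ler_pdivrMr //; lra.
have -> : (fun x => lam *: x - A x) = fun x => lam *: (x - T x).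
  by apply: funext => x; rewrite scalerBr /T scalerA mulfV // scale1r.
apply: invertible_op_scale lamn0 (neumann_invertible complete _ bT).
exact: lin_op_comp (lin_op_scale _) lA.
Qed.

Lemma specrad_ge0 A : 0 <= specrad ip A.
Proof.
rewrite /specrad; set E := (X in sup X).
have [hE|hE] := pselect (has_sup E); last by rewrite sup_out.
have [[_ [lam lamE _]] _] := hE.
by apply: le_trans (sup_upper_bound hE (_ : E _)); [exact: normc_ge0 | exists lam].
Qed.

Lemma le_specrad (complete : complete_space) A K lam :
  lin_op A -> 0 <= K -> bounded_by A K -> ~ invertible_op ip (fun x => lam *: x - A x) ->
  Normc.normc lam <= specrad ip A.
Proof.
move=> lA K0 bA lamA; apply: sup_upper_bound; last by exists lam.
split; first by exists (Normc.normc lam), lam.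
exists (2 * K + 1) => _ [mu muA <-]; rewrite leNgt; apply/negP => /ltW Kmu.
exact/muA/(resolvent_invertible complete lA K0 bA Kmu).
Qed.

(* A bounded inverse would give [|y| <= k |(tau - A) y|] for all [y]. *)
Lemma approx_eigen_not_invertible A (tau L : R) : 0 < L ->
  (forall e, 0 < e -> exists y, L <= nrm y ^+ 2 /\ nrm (tau%:C *: y - A y) ^+ 2 <= e) ->
  ~ invertible_op ip (fun x => tau%:C *: x - A x).
Proof.
move=> L0 approx [S [[lS [M bS]] [_ SA]]].
set k := `|M| + 1; have k0 : 0 < k by rewrite ltr_wpDl.
have k20 : 0 < 2 * k ^+ 2 by rewrite mulr_gt0 // exprn_gt0.
have [y [Ly yA]] := approx _ (divr_gt0 L0 k20).
set z := tau%:C *: y - A y in yA; have yz : nrm y <= k * nrm z.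
  rewrite -[y]SA -/z; apply: le_trans (bS z) _.
  by rewrite ler_wpM2r ?hnorm_ge0 // /k; have := ler_norm M; lra.
have := hnorm_ge0 z; have := hnorm_ge0 y => y0 z0.
have : nrm y ^+ 2 <= k ^+ 2 * nrm z ^+ 2 by rewrite -exprMn; nra.
have : k ^+ 2 * nrm z ^+ 2 <= k ^+ 2 * (L / (2 * k ^+ 2)) by rewrite ler_wpM2l ?sqr_ge0.
have -> : k ^+ 2 * (L / (2 * k ^+ 2)) = L / 2 by field; rewrite gt_eqF.
lra.
Qed.

Section RayleighQuotient.
Variables (P Q : W -> W) (KP KQ : R).
Hypotheses (pP : posop P KP) (pQ : posop Q KQ).

Let lPQ : lin_op (fun v => P (Q v)).
Proof. by case: pP => lP *; case: pQ => lQ *; exact: lin_op_comp. Qed.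

Let quad_scale (s : R) z : rdot (P (s%:C *: z)) (s%:C *: z) = s ^+ 2 * rdot (P z) z /\
  rdot (Q (P (s%:C *: z))) (P (s%:C *: z)) = s ^+ 2 * rdot (Q (P z)) (P z).
Proof.
case: pP => lP *; case: pQ => lQ *; rewrite rdot_scale_quad //; split => //.
by rewrite (lin_opZ lP) rdot_scale_quad.
Qed.

Lemma rayleigh_normalize z : 0 < rdot (P z) z -> exists w, rdot (P w) w = 1 /\
  rdot (Q (P z)) (P z) = rdot (Q (P w)) (P w) * rdot (P z) z.
Proof.
move=> z0; set a := rdot (P z) z in z0 *.
have s0 : 0 < Num.sqrt a by rewrite sqrtr_gt0.
exists ((Num.sqrt a)^-1%:C *: z); have [-> ->] := quad_scale (Num.sqrt a)^-1 z.
rewrite exprVn sqr_sqrtr ?ltW // mulVf ?gt_eqF //; split => //.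
by rewrite mulrAC mulVf ?mul1r // gt_eqF.
Qed.

(* [tau P - P Q P] is positive, which makes [P w] an approximate eigenvector of
   [P Q] for [tau] as soon as [<Q P w, P w>] is close to [tau <P w, w>]. *)
Lemma rayleigh_max_not_invertible tau : 0 < tau ->
  (forall z, rdot (Q (P z)) (P z) <= tau * rdot (P z) z) ->
  (forall e, 0 < e -> exists w, rdot (P w) w = 1 /\ tau - e <= rdot (Q (P w)) (P w)) ->
  ~ invertible_op ip (fun x => tau%:C *: x - P (Q x)).
Proof.
move=> tau0 QP_le near_max.
have [lP sP pP' KP0 bP] := pP; have [lQ sQ pQ' KQ0 bQ] := pQ.
pose D z := tau%:C *: P z - P (Q (P z)).
set KD := tau * KP + KP * (KQ * KP).
have pD : posop D KD.
  split.
  - exact: lin_op_sub (lin_op_comp (lin_op_scale _) lP) (lin_op_comp lPQ lP).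
  - by move=> z y; rewrite /D rdotBl rdotBr rdotZl rdotZr !sP sQ sP.
  - by move=> z; rewrite /D rdotBl rdotZl [rdot (P (Q _)) _]sP subr_ge0.
  - by rewrite /KD !addr_ge0 // !mulr_ge0 // ltW.
  - apply: bounded_by_sub; last by do 2![apply: bounded_by_comp => //]; rewrite mulr_ge0.
    by move=> z; rewrite hnormZr ger0_norm ?(ltW tau0) // -mulrA ler_wpM2l ?(ltW tau0).
have KQ1 : 0 < 2 * (KQ + 1) by rewrite mulr_gt0 // ltr_wpDl.
apply: (approx_eigen_not_invertible (divr_gt0 tau0 KQ1)) => e e0.
pose eps := Num.min (tau / 2) (e / (KD + 1)).
have KD0 : 0 <= KD by case: pD.
have eps0 : 0 < eps by rewrite lt_min !divr_gt0 // ltr_wpDl.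
have [w [w1 w_near]] := near_max eps eps0; exists (P w); split.
  have eps_tau : eps <= tau / 2 by rewrite ge_min lexx.
  have QPw := rdot_bounded (P w) bQ; have := sqr_ge0 (nrm (P w)).
  by rewrite ler_pdivrMr //; nra.
apply: le_trans (posop_norm_sqr pD w) _.
have -> : rdot (D w) w = tau - rdot (Q (P w)) (P w) by rewrite /D rdotBl rdotZl w1 mulr1 sP.
have eps_e : eps * (KD + 1) <= e by rewrite -ler_pdivlMr ?ltr_wpDl // ge_min lexx orbT.
have : KD * (tau - rdot (Q (P w)) (P w)) <= KD * eps by rewrite ler_wpM2l //; lra.
nra.
Qed.

Lemma rayleigh_le_specrad (complete : complete_space) x :
  rdot (Q (P x)) (P x) <= specrad ip (fun v => P (Q v)) * rdot (P x) x.
Proof.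
have [lP sP pP' KP0 bP] := pP; have [lQ sQ pQ' KQ0 bQ] := pQ.
set r := specrad ip _; have r0 : 0 <= r := specrad_ge0 _.
have P0 z : rdot (P z) z = 0 -> rdot (Q (P z)) (P z) = 0.
  by move/(posop_rdot_eq0 pP) ->; rewrite lin_op0 // rdot0l.
rewrite leNgt; apply/negP => x_gt.
have Px0 : 0 < rdot (P x) x.
  rewrite lt_def pP' andbT; apply: contraTneq x_gt => /[dup] /P0 -> ->.
  by rewrite mulr0 ltxx.
pose T (s : R) := exists w, rdot (P w) w = 1 /\ s = rdot (Q (P w)) (P w).
have supT : has_sup T.
  have [u0 [u01 _]] := rayleigh_normalize Px0.
  split; first by exists (rdot (Q (P u0)) (P u0)), u0.
  exists (KQ * KP) => _ [w [w1 ->]]; apply: le_trans (rdot_bounded _ bQ) _.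
  by rewrite ler_wpM2l // -[KP]mulr1 -w1 posop_norm_sqr.
set tau := sup T.
have T_le w : rdot (P w) w = 1 -> rdot (Q (P w)) (P w) <= tau.
  by move=> w1; apply: sup_upper_bound => //; exists w.
have QP_le z : rdot (Q (P z)) (P z) <= tau * rdot (P z) z.
  have [z0|z0] := eqVneq (rdot (P z) z) 0; first by rewrite P0 // z0 mulr0.
  have Pz0 : 0 < rdot (P z) z by rewrite lt_def z0 pP'.
  have [w [w1 ->]] := rayleigh_normalize Pz0.
  by rewrite ler_wpM2r ?T_le // ltW.
have r_tau : r < tau.
  have [w [w1 QPx]] := rayleigh_normalize Px0.
  by move: x_gt; rewrite QPx ltr_pM2r // => /lt_le_trans; apply; exact: T_le.
have tau0 : 0 < tau by apply: le_lt_trans r_tau.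
have near_max e : 0 < e -> exists w, rdot (P w) w = 1 /\ tau - e <= rdot (Q (P w)) (P w).
  by move=> e0; have [_ [w [w1 ->]] /ltW] := sup_adherent e0 supT; exists w.
have := le_specrad complete lPQ (mulr_ge0 KP0 KQ0) (bounded_by_comp KP0 bP bQ)
  (rayleigh_max_not_invertible tau0 QP_le near_max).
by rewrite normc_real ?(ltW tau0) // -/r; lra.
Qed.

End RayleighQuotient.
End InnerProductSpace.

(** * The direct sum H (+) H *)

Section PairSpace.
Variables (R : realType) (V : lmodType R[i]) (ip : V -> V -> R[i]).
Hypothesis ipV : inner_product ip.
Local Notation ipp := (ip2 ip).

Lemma ip2_inner : inner_product ipp.
Proof.
split.
- by move=> a x y z; rewrite /ip2 /= !(ip_linearl ipV) mulrDr addrACA.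
- by move=> x y; rewrite /ip2 conjcD -!(ip_conj ipV).
- by move=> x; rewrite /ip2 addr_ge0 ?(ip_ge0 ipV).
move=> [x1 x2]; rewrite /ip2 /= => /eqP; rewrite paddr_eq0 ?(ip_ge0 ipV) //.
by case/andP=> /eqP/(ip_eq0 ipV) -> /eqP/(ip_eq0 ipV) ->.
Qed.

Lemma rdot2E u z : rdot ipp u z = rdot ip u.1 z.1 + rdot ip u.2 z.2.
Proof. by rewrite /rdot /ip2 raddfD. Qed.

Lemma hnorm2_sqr u : hnorm ipp u ^+ 2 = hnorm ip u.1 ^+ 2 + hnorm ip u.2 ^+ 2.
Proof. by rewrite (hnorm_sqr ip2_inner) !(hnorm_sqr ipV) rdot2E. Qed.

Lemma lin_op_block (A B C D : V -> V) : lin_op A -> lin_op B -> lin_op C -> lin_op D ->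
  lin_op (opmx A B C D).
Proof.
move=> lA lB lC lD a u w.
have pairE (p q : V * V) : a *: p + q = (a *: p.1 + q.1, a *: p.2 + q.2) by [].
by rewrite /opmx !pairE /= lA lB lC lD !scalerDr; congr (_, _); rewrite addrACA.
Qed.

Lemma bounded_by_block (A B C D : V -> V) K : 0 <= K ->
  bounded_by ip A K -> bounded_by ip B K -> bounded_by ip C K -> bounded_by ip D K ->
  bounded_by ipp (opmx A B C D) (2 * K).
Proof.
move=> K0 bA bB bC bD u; rewrite /opmx.
have row_le E F : bounded_by ip E K -> bounded_by ip F K ->
    hnorm ip (E u.1 + F u.2) <= K * (hnorm ip u.1 + hnorm ip u.2).
  move=> bE bF; apply: le_trans (ler_hnormD ipV _ _) _.
  by rewrite mulrDr lerD.
apply: ler_sqr_ge0; first by rewrite !mulr_ge0 ?hnorm_ge0.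
rewrite hnorm2_sqr exprMn hnorm2_sqr /=.
have := row_le _ _ bA bB; have := row_le _ _ bC bD.
have := hnorm_ge0 ip (A u.1 + B u.2); have := hnorm_ge0 ip (C u.1 + D u.2).
have := hnorm_ge0 ip u.1; have := hnorm_ge0 ip u.2.
set p := hnorm ip u.1; set q := hnorm ip u.2 => q0 p0 b0 a0 hb ha.
have Kpq : 0 <= K * (p + q) by rewrite mulr_ge0 // addr_ge0.
have := sqr_ge0 (p - q); have := sqr_ge0 K; nra.
Qed.

(* The block operator [[|B|, B^*]; [B, |B^*|]] is positive: it is killed by
   [[|B|, -B^*]; [-B, |B^*|]], and the two add up to [2 diag(|B|, |B^*|)]. *)
Lemma mixed_schwarz (B Bs P Q : V -> V) KB KP KQ : lin_op B -> lin_op Bs -> radjoint ip B Bs ->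
  0 <= KB -> bounded_by ip B KB -> posop ip P KP -> posop ip Q KQ ->
  (forall x, P (P x) = Bs (B x)) -> (forall x, Q (Q x) = B (Bs x)) ->
  forall y x, rdot ip (B y) x ^+ 2 <= rdot ip (P y) y * rdot ip (Q x) x.
Proof.
move=> lB lBs BBs KB0 bB pP pQ PP QQ y x.
have [lP sP pP' KP0 bP] := pP; have [lQ sQ pQ' KQ0 bQ] := pQ.
have bBs := radjoint_bounded ipV BBs KB0 bB.
have BP := abs_intertwine ipV lB lBs BBs KB0 bB pP pQ PP QQ.
have PBs := abs_intertwine_adj ipV lB lBs BBs KB0 bB pP pQ PP QQ.
pose nB v := - B v; pose nBs v := - Bs v.
pose F := opmx P Bs B Q; pose G := opmx P nBs nB Q.
set K := KB + KP + KQ; have K0 : 0 <= K by rewrite !addr_ge0.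
have [KBK KPK KQK] : [/\ KB <= K, KP <= K & KQ <= K] by rewrite /K; split; lra.
have lF : lin_op F by exact: lin_op_block.
have sF : selfadj ipp F.
  by move=> u v; rewrite !rdot2E /F /opmx /= !(rdotDl ipV) !(rdotDr ipV) sP sQ BBs
    (radjoint_sym ipV BBs); lra.
have pF : psd ipp F.
  apply: (psd_of_annihilated ip2_inner lF sF (G := G) (KF := 2 * K) (KG := 2 * K)).
  - by rewrite mulr_ge0.
  - apply: bounded_by_block => //; [exact: bounded_by_le bP KPK | exact: bounded_by_le bBs KBK |
      exact: bounded_by_le bB KBK | exact: bounded_by_le bQ KQK].
  - by apply: lin_op_block => //; exact: lin_op_opp.
  - by rewrite mulr_ge0.
  - have bnB : bounded_by ip nB KB by move=> v; rewrite /nB (hnorm_opp ipV).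
    have bnBs : bounded_by ip nBs KB by move=> v; rewrite /nBs (hnorm_opp ipV).
    apply: bounded_by_block => //; [exact: bounded_by_le bP KPK | exact: bounded_by_le bnBs KBK |
      exact: bounded_by_le bnB KBK | exact: bounded_by_le bQ KQK].
  - move=> [u1 u2]; rewrite /G /F /opmx /nB /nBs /=.
    rewrite !(lin_opD lP) !(lin_opD lBs) !(lin_opD lQ) !(lin_opD lB) PP PBs QQ -BP.
    by rewrite subrr addNr.
  - move=> [u1 u2]; rewrite !rdot2E /F /G /opmx /nB /nBs /= !(rdotDl ipV) !(rdotNl ipV).
    by have := pP' u1; have := pQ' u2; lra.
have := selfadj_cauchy_schwarz ip2_inner lF sF pF (y, 0) (0, x).
rewrite !rdot2E /F /opmx /= (lin_op0 lBs) (lin_op0 lQ) (lin_op0 lP) (lin_op0 lB).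
by rewrite !addr0 !add0r !(rdot0r ipV) !addr0 !add0r.
Qed.

End PairSpace.

Lemma cross_terms_le (R : realType) (U W a b c d X Y M : R) :
  0 <= a -> 0 <= b -> 0 <= c -> 0 <= d -> 0 <= X -> 0 <= Y -> X + Y = 1 -> 0 <= M ->
  U ^+ 2 <= a * c -> W ^+ 2 <= d * b -> a + b <= M * Y -> c + d <= M * X ->
  U + W <= M / 2.
Proof.
move=> a0 b0 c0 d0 X0 Y0 XY M0 Uac Wdb abY cdX.
have UW : 2 * (U * W) <= a * d + b * c.
  have [UW0|UW0] := lerP (U * W) 0; first by have := mulr_ge0 a0 d0; nra.
  apply: ler_sqr_ge0; first by rewrite addr_ge0 ?mulr_ge0.
  have : U ^+ 2 * W ^+ 2 <= (a * c) * (d * b) by rewrite ler_pM ?sqr_ge0.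
  by have := sqr_ge0 (a * d - b * c); rewrite !exprMn; nra.
have UW2 : (U + W) ^+ 2 <= (a + b) * (c + d) by nra.
have prod_le : (a + b) * (c + d) <= (M * Y) * (M * X) by rewrite ler_pM ?addr_ge0.
have XY4 : X * Y * 4 <= 1 by have := sqr_ge0 (X - Y); nra.
apply: ler_sqr_ge0; first by rewrite divr_ge0.
apply: le_trans UW2 (le_trans prod_le _).
have -> : M * Y * (M * X) = M ^+ 2 * (X * Y) by ring.
have -> : (M / 2) ^+ 2 = M ^+ 2 * 4^-1 by field.
rewrite ler_wpM2l ?sqr_ge0 // -(ler_pM2r (_ : (0 : R) < 4)) // mulVf ?pnatr_eq0 //.
Qed.

(** * The numerical radius of [[0, B]; [C, 0]] *)

Section HilbertOperators.
Variables (R : realType) (V : lmodType R[i]) (ip : V -> V -> R[i]).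
Hypothesis ipV : inner_product ip.
Local Notation nrm := (hnorm ip).

Lemma opnorm_bounded A : bounded_op ip A ->
  bounded_by ip A (opnorm ip A) /\ 0 <= opnorm ip A.
Proof.
move=> [lA [M bA]]; rewrite /opnorm; set E := (X in sup X).
have ubE : ubound E `|M|.
  by move=> _ [x x1 <-]; apply: le_trans (bA x) _; rewrite x1 mulr1 ler_norm.
split=> [x|]; last first.
  have [hE|hE] := pselect (has_sup E); last by rewrite sup_out.
  have [[_ [x0 x01 _]] _] := hE.
  by apply: le_trans (sup_upper_bound hE (_ : E (nrm (A x0)))); [exact: hnorm_ge0 | exists x0].
have [->|x0] := eqVneq x 0; first by rewrite (lin_op0 lA) (hnorm0 ipV) mulr0.
set u := (nrm x)^-1%:C *: x; have u1 : nrm u = 1 := hnorm_normalize ipV x0.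
have hE : has_sup E.
  by split; first (by exists (nrm (A u)); exists u); exists `|M|.
have Eu : E (nrm (A u)) by exists u.
have := sup_upper_bound hE Eu.
rewrite (lin_opZ lA) (hnormZr ipV) ger0_norm ?invr_ge0 ?hnorm_ge0 //.
by rewrite ler_pdivrMl ?(hnorm_gt0 ipV) // mulrC.
Qed.

Lemma ip_ge0_selfadj P : lin_op P -> (forall x, 0 <= ip (P x) x) -> selfadj ip P.
Proof.
move=> lP P0 x y.
have Im0 z : Im (ip (P z) z) = 0 by have [-> _] := ge0_complex_real (P0 z).
have := Im0 (x + 'i *: y); rewrite (lin_opD lP) (lin_opZ lP) (ipDl ipV) !(ipDr ipV).
rewrite !(ipZl ipV) !(ipZr ipV) /rdot (ip_conj ipV (P y) x) Re_conjc.
move: (Im0 x) (Im0 y); case: (ip (P x) x) => ? ?; case: (ip (P x) y) => ? ?.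
by case: (ip (P y) x) => ? ?; case: (ip (P y) y) => ? ? /=; lra.
Qed.

Lemma adjoint_lin B Bs : is_adjoint ip B Bs -> lin_op Bs.
Proof.
move=> BBs a x y.
have same z : ip z (Bs (a *: x + y)) = ip z (a *: Bs x + Bs y).
  by rewrite -BBs (ipDr ipV) (ipZr ipV) !BBs -(ipZr ipV) -(ipDr ipV).
apply/eqP; rewrite -subr_eq0; apply/eqP/(ip_eq0 ipV).
by rewrite (ipDl ipV) (ipNl ipV) (ip_conj ipV _ (Bs _)) same -(ip_conj ipV) subrr.
Qed.

Lemma adjoint_sym B Bs : is_adjoint ip B Bs -> is_adjoint ip Bs B.
Proof. by move=> BBs x y; rewrite (ip_conj ipV y) -BBs -(ip_conj ipV). Qed.

Lemma adjoint_radjoint B Bs : is_adjoint ip B Bs -> radjoint ip B Bs.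
Proof. by move=> BBs x y; rewrite /rdot BBs. Qed.

Lemma sqrt_op_posop B Bs P K : is_adjoint ip B Bs -> 0 <= K -> bounded_by ip B K ->
  is_sqrt_op ip (fun x => Bs (B x)) P -> posop ip P K.
Proof.
move=> BBs K0 bB [[[lP _] P0] PP]; have sP := ip_ge0_selfadj lP P0.
split => // [x|x]; first by have [_ ->] := ge0_complex_real (P0 x).
apply: ler_sqr_ge0; first by rewrite mulr_ge0 ?hnorm_ge0.
rewrite (hnorm_sqr ipV) -sP PP (adjoint_radjoint (adjoint_sym BBs)) -(hnorm_sqr ipV).
by have := bB x; have := hnorm_ge0 ip (B x); nra.
Qed.

End HilbertOperators.

Section BlockNumericalRadius.
Variables (R : realType) (V : lmodType R[i]) (ip : V -> V -> R[i]).
Variables B C Bs Cs absB absBs absC absCs : V -> V.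
Hypotheses (ipV : inner_product ip) (complete : complete_space ip).
Hypotheses (bB : bounded_op ip B) (bC : bounded_op ip C).
Hypotheses (BBs : is_adjoint ip B Bs) (CCs : is_adjoint ip C Cs).
Hypotheses (sqB : is_sqrt_op ip (fun x => Bs (B x)) absB)
  (sqBs : is_sqrt_op ip (fun x => B (Bs x)) absBs)
  (sqC : is_sqrt_op ip (fun x => Cs (C x)) absC)
  (sqCs : is_sqrt_op ip (fun x => C (Cs x)) absCs).
Local Notation nrm := (hnorm ip).
Local Notation M := (Num.max (opnorm ip B) (opnorm ip C)).
Local Notation s1 := (Num.sqrt (specrad ip (fun x => absB (absCs x)))).
Local Notation s2 := (Num.sqrt (specrad ip (fun x => absBs (absC x)))).

Let M0 : 0 <= M.
Proof. by rewrite le_max (opnorm_bounded ipV bB).2. Qed.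

Let bounded_M A : bounded_op ip A -> opnorm ip A <= M -> bounded_by ip A M.
Proof. by move=> bA; apply: bounded_by_le; exact: (opnorm_bounded ipV bA).1. Qed.

Let BM : opnorm ip B <= M. Proof. by rewrite le_max lexx. Qed.
Let CM : opnorm ip C <= M. Proof. by rewrite le_max lexx orbT. Qed.
Let bBM : bounded_by ip B M. Proof. exact: bounded_M. Qed.
Let bCM : bounded_by ip C M. Proof. exact: bounded_M. Qed.

Let pB : posop ip absB M. Proof. exact (sqrt_op_posop ipV BBs M0 bBM sqB). Qed.
Let pC : posop ip absC M. Proof. exact (sqrt_op_posop ipV CCs M0 bCM sqC). Qed.
Let pBs : posop ip absBs M.
Proof.
have bBs := radjoint_bounded ipV (adjoint_radjoint BBs) M0 bBM.
exact (sqrt_op_posop ipV (adjoint_sym ipV BBs) M0 bBs sqBs).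
Qed.
Let pCs : posop ip absCs M.
Proof.
have bCs := radjoint_bounded ipV (adjoint_radjoint CCs) M0 bCM.
exact (sqrt_op_posop ipV (adjoint_sym ipV CCs) M0 bCs sqCs).
Qed.

Lemma mixed_schwarz_sqrt A As P Q : bounded_op ip A -> is_adjoint ip A As ->
  opnorm ip A <= M -> posop ip P M -> posop ip Q M ->
  is_sqrt_op ip (fun x => As (A x)) P -> is_sqrt_op ip (fun x => A (As x)) Q ->
  forall y x, rdot ip (A y) x ^+ 2 <= rdot ip (P y) y * rdot ip (Q x) x.
Proof.
move=> bA AAs AM pP pQ [_ PP] [_ QQ].
exact (mixed_schwarz ipV bA.1 (adjoint_lin ipV AAs) (adjoint_radjoint AAs) M0
  (bounded_M bA AM) pP pQ PP QQ).
Qed.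

Lemma block_rdot_le x y : nrm x ^+ 2 + nrm y ^+ 2 = 1 ->
  Normc.normc (ip (B y) x + ip (C x) y) <= 2^-1 * M + 2^-1 * Num.max s1 s2.
Proof.
move=> xy1; have [u [uu <-]] := rotate_to_real (ip (B y) x + ip (C x) y).
have lB := bB.1; have lC := bC.1.
rewrite mulrDr -!(ipZl ipV) -(lin_opZ lB) -(lin_opZ lC) raddfD -!/(rdot _ _ _).
have [laB _ pdB _ _] := pB; have [laC _ pdC _ _] := pC.
have [_ _ pdBs _ _] := pBs; have [_ _ pdCs _ _] := pCs.
have mixB := mixed_schwarz_sqrt bB BBs BM pB pBs sqB sqBs (u *: y) x.
have mixC := mixed_schwarz_sqrt bC CCs CM pC pCs sqC sqCs (u *: x) y.
rewrite (rdot_unimodular ipV laB _ uu) in mixB; rewrite (rdot_unimodular ipV laC _ uu) in mixC.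
have sum_y := posop_add_rdot_le ipV pB pCs (specrad_ge0 _ _)
  (rayleigh_le_specrad ipV pB pCs complete) y.
have sum_x := posop_add_rdot_le ipV pBs pC (specrad_ge0 _ _)
  (rayleigh_le_specrad ipV pBs pC complete) x.
have s1S : s1 <= Num.max s1 s2 by rewrite le_max lexx.
have s2S : s2 <= Num.max s1 s2 by rewrite le_max lexx orbT.
have S0 : 0 <= Num.max s1 s2 by apply: le_trans s1S; exact: sqrtr_ge0.
rewrite -mulrDr mulrC; apply: (cross_terms_le (a := rdot ip (absB y) y)
  (b := rdot ip (absCs y) y) (c := rdot ip (absBs x) x) (d := rdot ip (absC x) x)
  (X := nrm x ^+ 2) (Y := nrm y ^+ 2)) => //; rewrite ?sqr_ge0 ?addr_ge0 //.
  by apply: le_trans sum_y _; rewrite ler_wpM2r ?sqr_ge0 ?lerD2l.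
by apply: le_trans sum_x _; rewrite ler_wpM2r ?sqr_ge0 ?lerD2l.
Qed.

End BlockNumericalRadius.

Theorem mainTheorem1 (R : realType) (V : lmodType R[i]) (ip : V -> V -> R[i])
  (B C Bs Cs absB absBs absC absCs : V -> V) :
  is_hilbert ip ->
  bounded_op ip B -> bounded_op ip C ->
  is_adjoint ip B Bs -> is_adjoint ip C Cs ->
  is_sqrt_op ip (fun x => Bs (B x)) absB ->
  is_sqrt_op ip (fun x => B (Bs x)) absBs ->
  is_sqrt_op ip (fun x => Cs (C x)) absC ->
  is_sqrt_op ip (fun x => C (Cs x)) absCs ->
  numrad2 ip (opmx (fun _ => 0) B C (fun _ => 0))
  <= 2^-1 * Num.max (opnorm ip B) (opnorm ip C)
     + 2^-1 * Num.max (Num.sqrt (specrad ip (fun x => absB (absCs x))))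
                      (Num.sqrt (specrad ip (fun x => absBs (absC x)))).
Proof.
move=> [ipL ipC ipP ipD complete] bB bC BBs CCs sqB sqBs sqC sqCs.
have ipV : inner_product ip by split.
set rhs := (X in _ <= X); rewrite /numrad2; set E := (X in sup X).
have ubE : ubound E rhs.
  move=> _ [[x y] xy1 <-]; rewrite /opmx /ip2 /= add0r addr0.
  apply: (block_rdot_le ipV complete bB bC BBs CCs sqB sqBs sqC sqCs).
  by rewrite !(hnorm_sqr ipV); move: xy1; rewrite /ip2 /= raddfD.
have [En0|E0] := pselect (E !=set0)%classic; first exact: ge_sup En0 ubE.
rewrite sup_out => [|[]//]; apply: addr_ge0; apply: mulr_ge0; rewrite ?invr_ge0 //.
  by rewrite le_max (opnorm_bounded ipV bB).2.
by rewrite le_max sqrtr_ge0.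
Qed.
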